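(* Let $A$ be an $n\times n$ nonnegative irreducible matrix with Perron eigenvalue $\lambda_p$ and Perron eigenvector $v_p$ (all of whose entries are positive). Let $S=\mathrm{diag}(v_p)$ and $B=S^{-1}AS$. Then every eigenvalue of $A$ other than $\lambda_p$ lies in the Gershgorin region of the second type of $B^T$.
   Context: The Perron eigenvalue of a nonnegative irreducible matrix is its spectral radius, which is a simple eigenvalue with an eigenvector (the Perron eigenvector) having all entries positive. For a real $n\times n$ matrix $M=[m_{ij}]$ and an index $j$, let $y_1\ge\dots\ge y_n$ be the non-increasing rearrangement of $m_{1j},\dots,m_{j-1,j},0,m_{j+1,j},\dots,m_{nj}$. Define $\hat r_j=\sum_{t=1}^{(n-1)/2}y_t-\sum_{t=(n+3)/2}^{n}y_t$ if $n$ is odd and $\hat r_j=\sum_{t=1}^{n/2}y_t-\sum_{t=n/2+1}^{n}y_t$ if $n$ is even. The Gershgorin region of the second type of $M^T$ is $\bigcup_{j=1}^n\{z\in\mathbb{C}:|z-m_{jj}|\le\hat r_j\}$. *)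

From HB Require Import structures.
From mathcomp Require Import all_boot all_order all_algebra.
From mathcomp Require Import complex.
Set Implicit Arguments. Unset Strict Implicit. Unset Printing Implicit Defensive.
Import Order.TTheory GRing.Theory Num.Theory.
Local Open Scope ring_scope.
Local Open Scope complex_scope.

Definition nonneg_mx (R : numDomainType) n (A : 'M[R]_n) : Prop :=
  forall i j, 0 <= A i j.

(* Irreducible matrix: there is no nonempty proper subset I of the indices with
   A i j = 0 for all i in I, j not in I (i.e. A is not permutation-similar to a
   block upper triangular matrix with nontrivial diagonal blocks). *)
Definition irreducible_mx (R : numDomainType) n (A : 'M[R]_n) : Prop :=
  forall I : {set 'I_n}, I != set0 -> I != setT ->
    exists i, exists j, [/\ i \in I, j \notin I & A i j != 0].

Definition col_sorted (R : realDomainType) n (M : 'M[R]_n) (j : 'I_n) : seq R :=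
  sort (fun x y : R => y <= x)
       [seq (if i == j then 0 else M i j) | i <- enum 'I_n].

(* \hat r_j (1-based formulas of the paper translated to 0-based indices). *)
Definition rhat (R : realDomainType) n (M : 'M[R]_n) (j : 'I_n) : R :=
  let y := col_sorted M j in
  if odd n then
    \sum_(0 <= t < (n - 1) %/ 2) y`_t - \sum_((n + 3) %/ 2 - 1 <= t < n) y`_t
  else
    \sum_(0 <= t < n %/ 2) y`_t - \sum_(n %/ 2 <= t < n) y`_t.

Definition gersh2_region (R : rcfType) n (N : 'M[R]_n) : pred R[i] :=
  fun z => [exists j, `|z - (N^T j j)%:C| <= (rhat N^T j)%:C].

(* Since S 1 = v_p, the matrix B has all row sums equal to lambda_p, i.e.
   B 1 = lambda_p 1.  An eigenvalue mu of A is one of B, with a left eigenvector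
   x B = mu x; pairing with 1 gives mu (x 1) = lambda_p (x 1), so the entries of x
   sum to 0 when mu <> lambda_p.  Hence for every real c the k-th coordinate of
   x B = mu x can be rewritten as (mu - b_kk) x_k = sum_i x_i (y_i - c), where y is
   column k of B with its diagonal entry replaced by 0.  Choosing k with |x_k|
   maximal gives |mu - b_kk| <= sum_i |y_i - c|, and for c the median of y the
   right-hand side is exactly \hat r_k. *)

From HB Require Import structures.
From mathcomp Require Import all_boot all_order all_algebra.
From mathcomp Require Import complex zify.
Import Order.TTheory GRing.Theory Num.Theory.
Set Implicit Arguments.
Unset Strict Implicit.
Unset Printing Implicit Defensive.
Local Open Scope ring_scope.
Local Open Scope complex_scope.

Definition offdiag_col (V : nmodType) n (M : 'M[V]_n) (j i : 'I_n) : V :=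
  if i == j then 0 else M i j.

Lemma offdiag_col_map (U V : nmodType) (f : {additive U -> V}) n (M : 'M[U]_n) j i :
  offdiag_col (map_mx f M) j i = f (offdiag_col M j i).
Proof. by rewrite /offdiag_col mxE (fun_if f) raddf0. Qed.

Section MedianDeviation.
Variable R : realDomainType.

Lemma sum_abs_sub_median (s : seq R) : sorted (fun x y => y <= x) s ->
  let n := size s in let m := n./2 in
  \sum_(0 <= t < n) `|s`_t - s`_m| =
    \sum_(0 <= t < m) s`_t - \sum_(n - m <= t < n) s`_t.
Proof.
move=> s_sorted n m.
have s_ge i j : (i <= j < n)%N -> s`_j <= s`_i.
  move=> /andP[le_ij lt_jn].
  have ge_trans : transitive (fun x y : R => y <= x).
    by move=> a b c /= h1 h2; apply: le_trans h2 h1.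
  by apply: (sorted_leq_nth ge_trans _ 0 s_sorted); rewrite ?inE ?(leq_ltn_trans le_ij).
have [le_m_nm le_nm_n] : (m <= n - m)%N /\ (n - m <= n)%N by rewrite /m; lia.
rewrite (big_cat_nat (leq0n m) (leq_trans le_m_nm le_nm_n)).
rewrite (big_cat_nat le_m_nm le_nm_n) /=.
have -> : \sum_(m <= t < n - m) `|s`_t - s`_m| = 0.
  apply: big1_seq => t /andP[_]; rewrite mem_index_iota => t_range.
  have -> : t = m by rewrite /m in t_range *; lia.
  by rewrite subrr normr0.
rewrite add0r (eq_big_nat _ _ (F2 := fun t => s`_t - s`_m)); last first.
  by move=> t /andP[_ lt_tm]; rewrite ger0_norm // subr_ge0 s_ge //; lia.
rewrite [X in _ + X](eq_big_nat _ _ (F2 := fun t => s`_m - s`_t)); last first.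
  by move=> t /andP[le_nm_t lt_tn]; rewrite ler0_norm ?opprB // subr_le0 s_ge //; lia.
rewrite !sumrB !sumr_const_nat subn0.
have -> : (n - (n - m) = m)%N by lia.
by rewrite addrA subrK.
Qed.

Lemma rhatE n (M : 'M[R]_n) j : let y := col_sorted M j in
  rhat M j = \sum_(0 <= t < n./2) y`_t - \sum_(n - n./2 <= t < n) y`_t.
Proof.
rewrite /rhat -divn2; have := modn2 n; case: ifP => _ n_mod2.
  have -> : ((n - 1) %/ 2 = n %/ 2)%N by lia.
  by have -> : ((n + 3) %/ 2 - 1 = n - n %/ 2)%N by lia.
by have -> : (n - n %/ 2 = n %/ 2)%N by lia.
Qed.

Lemma rhat_sum_abs n (M : 'M[R]_n) j :
  rhat M j = \sum_i `|offdiag_col M j i - (col_sorted M j)`_(n./2)|.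
Proof.
set y := col_sorted M j; set c := y`_(n./2).
have size_y : size y = n by rewrite size_sort size_map size_enum_ord.
have sorted_y : sorted (fun a b => b <= a) y.
  by apply: sort_sorted => a b; exact: le_total.
have := sum_abs_sub_median sorted_y; rewrite /= size_y rhatE -/y -/c => <-.
rewrite -{1}size_y -(big_nth 0 predT (fun v => `|v - c|)) /=.
by rewrite (perm_big _ (permEl (perm_sort _ _))) big_map big_enum.
Qed.

End MedianDeviation.

Lemma left_eigenvector_sum_eq0 (F : fieldType) n (B : 'M[F]_n) lam mu
    (x : 'rV[F]_n) :
  B *m const_mx 1 = lam *: const_mx 1 :> 'cV_n -> x *m B = mu *: x -> mu != lam ->
  \sum_i x 0 i = 0.
Proof.
move=> B1 xB mu_neq.
have : (mu - lam) *: (x *m const_mx 1) = 0 :> 'M_1.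
  by rewrite scalerBl scalemxAl -xB -mulmxA B1 scalemxAr subrr.
move/eqP; rewrite scalemx_eq0 subr_eq0 (negbTE mu_neq) => /eqP/matrixP/(_ 0 0).
by rewrite !mxE; under eq_bigr do rewrite mxE mulr1.
Qed.

Lemma left_eigenvector_offdiag_shift (F : comPzRingType) n (B : 'M[F]_n) mu
    (x : 'rV[F]_n) k c :
  x *m B = mu *: x -> \sum_i x 0 i = 0 ->
  (mu - B k k) * x 0 k = \sum_i x 0 i * (offdiag_col B k i - c).
Proof.
move=> xB sum0.
have xBk : \sum_i x 0 i * B i k = mu * x 0 k.
  by have := congr1 (fun y : 'rV_n => y 0 k) xB; rewrite !mxE.
under eq_bigr => i _ do rewrite mulrBr.
rewrite sumrB -mulr_suml sum0 mul0r subr0 mulrBl -xBk.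
rewrite (bigD1 k) //= [in RHS](bigD1 k) //= /offdiag_col eqxx mulr0 add0r.
rewrite [B k k * _]mulrC addrAC subrr add0r.
by apply: eq_bigr => i /negbTE ->.
Qed.

Section RowSumGershgorin.
Variable R : rcfType.

Lemma norm_real_complex (r : R) : `|r%:C| = `|r|%:C.
Proof. by rewrite normc_def /= expr0n addr0 sqrtr_sqr. Qed.

Lemma exists_max_norm_entry n (x : 'rV[R[i]]_n) : x != 0 ->
  exists2 k, 0 < `|x 0 k| & forall j, `|x 0 j| <= `|x 0 k|.
Proof.
move=> x_neq0.
have /existsP[i0 xi0_neq0] : [exists i, x 0 i != 0].
  apply: contraNT x_neq0 => /existsPn x0; apply/eqP/rowP => i.
  by rewrite mxE; apply/eqP/negbNE/x0.
have [k _ k_max] := arg_maxP (fun j => complex.Re `|x 0 j|) (isT : predT i0).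
have x_le j : `|x 0 j| <= `|x 0 k|.
  rewrite -[`|x 0 j|]RRe_real ?normr_real // -[`|x 0 k|]RRe_real ?normr_real //.
  by rewrite lecR; exact: k_max.
by exists k => //; apply: lt_le_trans (x_le i0); rewrite normr_gt0.
Qed.

Lemma left_eigenvalue_in_offdiag_disk n (B : 'M[R]_n) mu (x : 'rV[R[i]]_n) :
  x *m map_mx (real_complex R) B = mu *: x -> x != 0 -> \sum_i x 0 i = 0 ->
  exists k, forall c : R,
    `|mu - (B k k)%:C| <= (\sum_i `|offdiag_col B k i - c|)%:C.
Proof.
move=> xB x_neq0 sum0; have [k xk_gt0 xk_max] := exists_max_norm_entry x_neq0.
exists k => c; rewrite -(ler_pM2r xk_gt0) -normrM.
have := left_eigenvector_offdiag_shift k c%:C xB sum0; rewrite mxE => ->.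
apply: le_trans (ler_norm_sum _ _ _) _.
rewrite rmorph_sum mulr_suml; apply: ler_sum => i _.
rewrite offdiag_col_map -rmorphB normrM norm_real_complex mulrC.
by rewrite ler_wpM2l ?ler0c.
Qed.

Lemma eigenvalue_in_gersh2_region n (B : 'M[R]_n) lam mu :
  B *m const_mx 1 = lam *: const_mx 1 :> 'cV_n ->
  eigenvalue (map_mx (real_complex R) B) mu -> mu != lam%:C ->
  gersh2_region B^T mu.
Proof.
move=> B1 /eigenvalueP[x xB x_neq0] mu_neq.
have B1C : map_mx (real_complex R) B *m const_mx 1 = lam%:C *: const_mx 1 :> 'cV_n.
  have := congr1 (map_mx (real_complex R)) B1.
  by rewrite map_mxM map_mxZ map_const_mx rmorph1.
have sum0 := left_eigenvector_sum_eq0 B1C xB mu_neq.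
have [k in_disk] := left_eigenvalue_in_offdiag_disk xB x_neq0 sum0.
by apply/existsP; exists k; rewrite trmxK rhat_sum_abs.
Qed.

End RowSumGershgorin.

Lemma unitmx_diag (F : fieldType) n (d : 'rV[F]_n) :
  (forall i, d 0 i != 0) -> diag_mx d \in unitmx.
Proof.
by move=> d_neq0; rewrite unitmxE det_diag unitfE; apply/prodf_neq0 => i _.
Qed.

Lemma eigenvalue_similar (F : fieldType) n (A S : 'M[F]_n) mu :
  S \in unitmx -> eigenvalue A mu -> eigenvalue (invmx S *m A *m S) mu.
Proof.
move=> S_unit /eigenvalueP[u uA u_neq0]; apply/eigenvalueP; exists (u *m S).
  by rewrite !mulmxA -(mulmxA u) mulmxV // mulmx1 uA scalemxAl.
by rewrite mulmx_free_eq0 ?row_free_unit.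
Qed.

Lemma diag_similar_row_sums (F : fieldType) n (A : 'M[F]_n) lam (v : 'cV[F]_n) :
  (forall i, v i 0 != 0) -> A *m v = lam *: v ->
  let S := diag_mx v^T in
  invmx S *m A *m S *m const_mx 1 = lam *: const_mx 1 :> 'cV_n.
Proof.
move=> v_neq0 Av S.
have S_unit : S \in unitmx by apply: unitmx_diag => i; rewrite mxE.
have S1 : S *m const_mx 1 = v :> 'cV_n.
  by apply/matrixP => i j; rewrite mul_diag_mx !mxE mulr1 (ord1 j).
by rewrite -!mulmxA S1 Av -scalemxAr -S1 mulmxA mulVmx // mul1mx.
Qed.

Theorem corollary1 (R : rcfType) (n : nat) (A : 'M[R]_n)
  (lambda_p : R) (v_p : 'cV[R]_n) :
  nonneg_mx A -> irreducible_mx A ->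
  (* lambda_p is the spectral radius of A and an eigenvalue of A *)
  eigenvalue (map_mx (real_complex R) A) lambda_p%:C ->
  (forall mu : R[i], eigenvalue (map_mx (real_complex R) A) mu ->
     `|mu| <= lambda_p%:C) ->
  (* v_p is a Perron eigenvector: positive entries, A v_p = lambda_p v_p *)
  (forall i, 0 < v_p i 0) ->
  A *m v_p = lambda_p *: v_p ->
  let S := diag_mx v_p^T in
  let B := invmx S *m A *m S in
  forall mu : R[i], eigenvalue (map_mx (real_complex R) A) mu ->
    mu != lambda_p%:C -> gersh2_region B^T mu.
Proof.
move=> _ _ _ _ v_gt0 Av S B mu mu_eig mu_neq.
have v_neq0 i : v_p i 0 != 0 := lt0r_neq0 (v_gt0 i).
apply: (eigenvalue_in_gersh2_region (diag_similar_row_sums v_neq0 Av)) mu_neq.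
rewrite /B !map_mxM map_invmx; apply: eigenvalue_similar => //.
by rewrite map_unitmx; apply: unitmx_diag => i; rewrite mxE.
Qed.
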